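(* Let $f:\mathbb{R}^n\to\mathbb{R}$ be a continuous, $L$-smooth loss function with global minimum $w^*$, and let $E(w):=f(w)-f(w^* )$. Let $w_i$ and $w_{i+1}$ be two subsequent points of a sequence generated by the Loss-Guarded L2O algorithm using deterministic gradient descent with step size $\alpha/L$ (for some $\alpha>0$) as the guarding mechanism. Then $$E(w_{i+1})-E(w_i)\le -\frac{\alpha}{L}\Big(1-\frac{\alpha}{2}\Big)\|\nabla f(w_i)\|_2^2$$ and $$E(w_i)\ge \frac{\alpha}{L}\Big(1-\frac{\alpha}{2}\Big)\|\nabla f(w_i)\|_2^2.$$
   Context: Loss-Guarded L2O algorithm with deterministic gradient descent: at each step $i$, an arbitrary black-box rule proposes a point $y_i$, the fallback proposes $z_i=w_i-\frac{\alpha}{L}\nabla f(w_i)$, and $w_{i+1}=y_i$ if $f(y_i)<f(z_i)$, otherwise $w_{i+1}=z_i$. $f$ is $L$-smooth means $f(y)\le f(x)+\langle\nabla f(x),y-x\rangle+\frac{L}{2}\|y-x\|_2^2$ for all $x,y$. *)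

From HB Require Import structures.
From mathcomp Require Import all_boot all_order all_algebra.
From mathcomp Require Import all_classical all_reals all_analysis.
Set Implicit Arguments. Unset Strict Implicit. Unset Printing Implicit Defensive.
Import Order.TTheory GRing.Theory Num.Theory.
Import numFieldNormedType.Exports.
Local Open Scope ring_scope.

Definition dotv (R : realType) (n : nat) (u v : 'rV[R]_n) : R :=
  \sum_(i < n) u 0 i * v 0 i.
Definition norm2sq (R : realType) (n : nat) (v : 'rV[R]_n) : R := dotv v v.

Definition grad (R : realType) (n : nat) (f : 'rV[R]_n -> R) (x : 'rV[R]_n)
  : 'rV[R]_n := \row_(i < n) ('D_(delta_mx 0 i) f x).

Definition L_smooth (R : realType) (n : nat) (f : 'rV[R]_n -> R) (L : R) : Prop :=
  forall x y : 'rV[R]_n,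
    f y <= f x + dotv (grad f x) (y - x) + L / 2 * norm2sq (y - x).

Definition gd_step (R : realType) (n : nat) (f : 'rV[R]_n -> R) (L alpha : R)
  (w : 'rV[R]_n) : 'rV[R]_n := w - (alpha / L) *: grad f w.

Definition loss_guarded_step (R : realType) (n : nat) (f : 'rV[R]_n -> R)
  (L alpha : R) (w y : 'rV[R]_n) : 'rV[R]_n :=
  if f y < f (gd_step f L alpha w) then y else gd_step f L alpha w.

(* The guard never accepts a point worse than the gradient step z = w - (alpha/L) grad f(w),
   and L-smoothness applied between w and z gives the usual sufficient-decrease bound
   f(z) <= f(w) - (alpha/L)(1 - alpha/2) |grad f(w)|^2.  The second inequality follows
   from the first because E(w_{i+1}) >= 0. *)
From HB Require Import structures.
From mathcomp Require Import all_boot all_order all_algebra.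
From mathcomp Require Import all_classical all_reals all_analysis.
From mathcomp Require Import ring lra.
Set Implicit Arguments. Unset Strict Implicit. Unset Printing Implicit Defensive.
Import Order.TTheory GRing.Theory Num.Theory.
Import numFieldNormedType.Exports.
Local Open Scope ring_scope.

Section Dotv.
Variables (R : realType) (n : nat).
Implicit Types (c : R) (u v : 'rV[R]_n).

Lemma dotvZl c u v : dotv (c *: u) v = c * dotv u v.
Proof. by rewrite /dotv mulr_sumr; apply: eq_bigr => i _; rewrite mxE mulrA. Qed.

Lemma dotvZr c u v : dotv u (c *: v) = c * dotv u v.
Proof.
by rewrite /dotv mulr_sumr; apply: eq_bigr => i _; rewrite mxE mulrCA.
Qed.

Lemma norm2sqZ c v : norm2sq (c *: v) = c ^+ 2 * norm2sq v.
Proof. by rewrite /norm2sq dotvZl dotvZr mulrA. Qed.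

End Dotv.

Lemma gd_step_descent (R : realType) (n : nat) (f : 'rV[R]_n -> R) (L alpha : R)
    (w : 'rV[R]_n) :
  L != 0 -> L_smooth f L ->
  f (gd_step f L alpha w)
    <= f w - alpha / L * (1 - alpha / 2) * norm2sq (grad f w).
Proof.
move=> L_neq0 smooth_f; set g := grad f w.
have step_diff : gd_step f L alpha w - w = (- (alpha / L)) *: g.
  by rewrite /gd_step scaleNr addrAC subrr add0r.
have := smooth_f w (gd_step f L alpha w).
rewrite step_diff dotvZr norm2sqZ -/g.
suff -> : f w + - (alpha / L) * norm2sq g + L / 2 * ((- (alpha / L)) ^+ 2 * norm2sq g)
          = f w - alpha / L * (1 - alpha / 2) * norm2sq g by [].
by field.
Qed.

Lemma loss_guarded_step_le_gd_step (R : realType) (n : nat) (f : 'rV[R]_n -> R)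
    (L alpha : R) (w y : 'rV[R]_n) :
  f (loss_guarded_step f L alpha w y) <= f (gd_step f L alpha w).
Proof. by rewrite /loss_guarded_step; case: ifP => [/ltW|]. Qed.

Theorem proposition1 (R : realType) (n : nat) (f : 'rV[R]_n -> R) (L alpha : R)
  (wstar : 'rV[R]_n) (w y : nat -> 'rV[R]_n) :
  continuous f ->
  (forall x, differentiable f x) ->
  0 < L -> L_smooth f L ->
  (forall v, f wstar <= f v) ->
  0 < alpha ->
  (forall i, w i.+1 = loss_guarded_step f L alpha (w i) (y i)) ->
  forall i,
    (f (w i.+1) - f wstar) - (f (w i) - f wstar)
      <= - (alpha / L * (1 - alpha / 2) * norm2sq (grad f (w i)))
    /\ alpha / L * (1 - alpha / 2) * norm2sq (grad f (w i)) <= f (w i) - f wstar.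
Proof.
move=> _ _ L_gt0 smooth_f wstar_min _ w_next i.
have descent := le_trans (loss_guarded_step_le_gd_step f L alpha (w i) (y i))
                         (gd_step_descent alpha (w i) (lt0r_neq0 L_gt0) smooth_f).
rewrite -w_next in descent.
have := wstar_min (w i.+1).
split; lra.
Qed.
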